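(* Let $\mathbb{K}$ be a field of characteristic zero and let $\mathbb{K}(x)[S_x]$ be the ring of linear recurrence operators, in which $S_x\, a(x) = a(x+1)\, S_x$ for $a\in\mathbb{K}(x)$. Let $m$ be a positive integer and let $L\in\mathbb{K}(x)[S_x]$ be nonzero, with $m$-exponent separation $L=L_0+L_1+\cdots+L_{m-1}$, where $L_i=\sum_{j=0}^{r_i}\ell_{i,j}S_x^{jm+i}$ with $\ell_{i,j}\in\mathbb{K}(x)$. Let $\mathcal{L}_m$ be the $m\times m$ matrix over $\mathbb{K}(x)[S_x]$ whose entry in row $i$ and column $j$ (indices $0\le i,j\le m-1$) is $L_{(i-j)\bmod m}$, i.e. its first row is $L_0, L_{m-1}, L_{m-2},\ldots,L_1$, its second row is $L_1,L_0,L_{m-1},\ldots,L_2$, and its last row is $L_{m-1},L_{m-2},\ldots,L_0$. Suppose $T_0,\ldots,T_{m-1}\in\mathbb{K}(x)[S_x]$ satisfy $[T_0,\ldots,T_{m-1}]\cdot\mathcal{L}_m=0$, i.e. $\sum_{i=0}^{m-1}T_i L_{(i-j)\bmod m}=0$ for every $j=0,\ldots,m-1$. Then $T_0+T_1+\cdots+T_{m-1}=0$.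
   Context: Products of operators are taken in the noncommutative ring $\mathbb{K}(x)[S_x]$, and the product of a row vector by a matrix is computed with the row entries multiplied on the left. *)

From HB Require Import structures.
From mathcomp Require Import all_boot all_order all_algebra.
Set Implicit Arguments. Unset Strict Implicit. Unset Printing Implicit Defensive.
Import Order.TTheory GRing.Theory Num.Theory.
Local Open Scope ring_scope.

Notation ratfun K := {fraction {poly K}}.

Definition shiftx (K : fieldType) (a : ratfun K) : ratfun K :=
  let r := repr a in
  tofrac ((\n_r) \Po ('X + 1)) / tofrac ((\d_r) \Po ('X + 1)).

(* Operators in K(x)[S_x] are represented by their coefficient polynomials
   sum_i a_i S_x^i  <->  \sum_i a_i 'X^i  in {poly K(x)}.
   Addition (and zero) are those of {poly K(x)}; the (noncommutative)
   product is the Ore product given by S_x a = (shiftx a) S_x. *)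
Notation recop K := {poly ratfun K}.

Definition op_mul (K : fieldType) (p q : recop K) : recop K :=
  \sum_(i < size p) \sum_(j < size q)
     (p`_i * iter i (@shiftx K) q`_j) *: 'X^(i + j).

Definition msep (K : fieldType) (m : nat) (L : recop K) (i : nat) : recop K :=
  \poly_(k < size L) (if (k %% m)%N == i then L`_k else 0).

From HB Require Import structures.
From mathcomp Require Import all_boot all_order all_algebra zify.
Import Order.TTheory GRing.Theory Num.Theory.
Local Open Scope ring_scope.

(* Summing the columns of the system: the entries of each row of the circulant
   matrix add up to L, so (T_0 + ... + T_(m-1)) L = 0.  The shift x |-> x + 1
   maps nonzero rational functions to nonzero ones, hence the leading
   coefficient of a product of nonzero operators is nonzero and K(x)[S_x] has
   no zero divisors; as L != 0, the sum of the T_i vanishes. *)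

Lemma numer_repr_eq0 (R : idomainType) (x : {fraction R}) :
  (\n_(repr x) == 0) = (x == 0).
Proof.
rewrite FracField.numer0 /= reprK -tofrac0; unlock tofrac => /=.
have -> : Ratio (0 : R) 1 = ratio0 R.
  by rewrite /Ratio /insubd insubT ?oner_neq0 // => ?; exact: val_inj.
reflexivity.
Qed.

Section Shift.

Variable K : fieldType.

Lemma shiftx_eq0 (a : ratfun K) : (shiftx a == 0) = (a == 0).
Proof.
rewrite /shiftx mulf_eq0 invr_eq0 !tofrac_eq0 !comp_poly2_eq0 ?size_XaddC //.
by rewrite (negbTE (denom_ratioP _)) orbF numer_repr_eq0.
Qed.

Lemma iter_shiftx_eq0 n (a : ratfun K) : (iter n (@shiftx K) a == 0) = (a == 0).
Proof. by elim: n => [//|n IHn]; rewrite iterS shiftx_eq0. Qed.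

Lemma iter_shiftx0 n : iter n (@shiftx K) 0 = 0.
Proof. by apply/eqP; rewrite iter_shiftx_eq0. Qed.

End Shift.

Lemma sum_ord_widen {V : nmodType} n1 n2 (F : nat -> V) : (n1 <= n2)%N ->
  (forall i, (n1 <= i)%N -> F i = 0) -> \sum_(i < n1) F i = \sum_(i < n2) F i.
Proof.
move=> hn F0; rewrite (big_ord_widen _ F hn) big_mkcond.
by apply: eq_bigr => i _; case: ltnP => // /F0.
Qed.

Section OreProduct.

Context {K : fieldType}.
Implicit Types p q : recop K.

Definition op_mul_upto (n1 n2 : nat) p q : recop K :=
  \sum_(i < n1) \sum_(j < n2) (p`_i * iter i (@shiftx K) q`_j) *: 'X^(i + j).

Lemma op_mul_uptoE {n1 n2 p q} : (size p <= n1)%N -> (size q <= n2)%N ->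
  op_mul p q = op_mul_upto n1 n2 p q.
Proof.
move=> hp hq; pose F i j := (p`_i * iter i (@shiftx K) q`_j) *: 'X^(i + j).
rewrite /op_mul /op_mul_upto -/F (@sum_ord_widen _ _ _ (fun i => \sum_(j < size q) F i j) hp).
  apply: eq_bigr => i _; rewrite (@sum_ord_widen _ _ _ (F i) hq) // => j hj.
  by rewrite /F (nth_default _ hj) iter_shiftx0 mulr0 scale0r.
by move=> i hi; rewrite big1 // => j _; rewrite /F (nth_default _ hi) mul0r scale0r.
Qed.

Lemma op_mul_suml n (P : 'I_n -> recop K) q :
  op_mul (\sum_(k < n) P k) q = \sum_(k < n) op_mul (P k) q.
Proof.
set N := (\max_(k < n) size (P k))%N.
have hP k : (size (P k) <= N)%N by exact: (leq_bigmax_cond (P := xpredT)).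
have hS : (size (\sum_(k < n) P k)%R <= N)%N := size_sum _ _ _.
rewrite (op_mul_uptoE hS (leqnn _)).
under [RHS]eq_bigr do rewrite (op_mul_uptoE (hP _) (leqnn _)).
rewrite /op_mul_upto [RHS]exchange_big; apply: eq_bigr => i _.
rewrite [RHS]exchange_big; apply: eq_bigr => j _.
by rewrite coef_sum mulr_suml scaler_suml.
Qed.

Lemma coef_op_mul_lead p q :
  (op_mul p q)`_((size p).-1 + (size q).-1)
    = lead_coef p * iter (size p).-1 (@shiftx K) (lead_coef q).
Proof.
have [-> | p_neq0] := eqVneq p 0.
  by rewrite /op_mul size_poly0 big_ord0 coef0 lead_coef0 mul0r.
have [-> | q_neq0] := eqVneq q 0.
  rewrite /op_mul size_poly0 big1 => [|i _]; last by rewrite big_ord0.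
  by rewrite coef0 lead_coef0 iter_shiftx0 mulr0.
rewrite !lead_coefE /op_mul.
move: (size_poly_gt0 p) (size_poly_gt0 q); rewrite p_neq0 q_neq0.
case: (size p) => // a _; case: (size q) => // b _ /=.
have ij_max (i : 'I_a.+1) (j : 'I_b.+1) :
    (a + b == i + j)%N = (i == ord_max) && (j == ord_max).
  by have := ltn_ord i; have := ltn_ord j; rewrite -!(inj_eq val_inj) /=; lia.
rewrite coef_sum; under eq_bigr do rewrite coef_sum.
under eq_bigr do under eq_bigr do rewrite coefZ coefXn ij_max.
rewrite (bigD1 ord_max) //= [X in _ + X]big1 ?addr0 => [|i /negbTE i_max]; last first.
  by rewrite big1 // => j _; rewrite i_max mulr0.
rewrite (bigD1 ord_max) //= [X in _ + X]big1 ?addr0 => [|j /negbTE j_max]; last first.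
  by rewrite j_max andbF mulr0.
by rewrite !eqxx mulr1.
Qed.

Lemma op_mul_eq0 p q : q != 0 -> (op_mul p q == 0) = (p == 0).
Proof.
move=> q_neq0; apply/eqP/eqP => [pq0 | ->]; last first.
  by rewrite /op_mul size_poly0 big_ord0.
have := coef_op_mul_lead p q; rewrite pq0 coef0 => /esym/eqP.
by rewrite mulf_eq0 iter_shiftx_eq0 !lead_coef_eq0 (negbTE q_neq0) orbF => /eqP.
Qed.

End OreProduct.

Lemma eq_modn_subr (m r i j : nat) : (r < m)%N -> (j < m)%N ->
  (r == (i + m - j) %% m)%N = (r + j == i %[mod m])%N.
Proof.
move=> hr hj; rewrite -{1}(modn_small hr) -(eqn_modDr j) subnK ?modnDr //.
by rewrite ltnW // ltn_addl.
Qed.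

Section Separation.

Variables (K : fieldType) (m : nat) (L : recop K).

Lemma coef_msep r k : (msep m L r)`_k = if (k %% m == r)%N then L`_k else 0.
Proof.
rewrite coef_poly; case: ltnP => // hk.
by rewrite nth_default //; case: ifP.
Qed.

(* Each coefficient of L lies in exactly one piece of row [i], so any [f] with
   [f 0 = 0] passes through the row sum; [f] will be an iterated shift, whose
   additivity is thereby never needed. *)
Lemma sum_coef_msep_row (f : ratfun K -> ratfun K) (i : 'I_m) k : f 0 = 0 ->
  \sum_(j < m) f (msep m L ((i + m - j) %% m)%N)`_k = f L`_k.
Proof.
move=> f0; have m_gt0 : (0 < m)%N by apply: leq_ltn_trans (ltn_ord i).
have row_k (j : 'I_m) : (k %% m == (i + m - j) %% m)%N
    = (j == (i + m - k %% m) %% m :> nat)%N.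
  by rewrite eq_modn_subr ?ltn_pmod // addnC -eq_modn_subr ?ltn_pmod.
have hj0 : ((i + m - k %% m) %% m < m)%N by rewrite ltn_pmod.
rewrite (bigD1 (Ordinal hj0)) //= big1 ?addr0 => [|j /negbTE j_neq].
  by rewrite coef_msep (row_k (Ordinal hj0)) eqxx.
by rewrite coef_msep row_k -[_ == _ :> nat]/(j == Ordinal hj0) j_neq f0.
Qed.

Lemma op_mul_sum_msep_row p (i : 'I_m) :
  \sum_(j < m) op_mul p (msep m L ((i + m - j) %% m)%N) = op_mul p L.
Proof.
rewrite (op_mul_uptoE (leqnn _) (leqnn (size L))).
under eq_bigr do rewrite (op_mul_uptoE (leqnn _) (size_poly _ _)).
rewrite /op_mul_upto exchange_big; apply: eq_bigr => a _.
rewrite exchange_big; apply: eq_bigr => b _.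
rewrite -scaler_suml -mulr_sumr.
by rewrite (sum_coef_msep_row (iter a (@shiftx K))) ?iter_shiftx0.
Qed.

End Separation.

Theorem lemma4p1 (K : fieldType) (hK : [pchar K] =i pred0)
  (m : nat) (hm : (0 < m)%N) (L : recop K) (hL : L != 0)
  (T : 'I_m -> recop K) :
  (forall j : 'I_m,
     \sum_(i < m) op_mul (T i) (msep m L ((i + m - j) %% m)%N) = 0) ->
  \sum_(i < m) T i = 0.
Proof.
move=> TL0; apply/eqP; rewrite -(op_mul_eq0 _ _ hL) op_mul_suml.
have -> : \sum_(i < m) op_mul (T i) L
          = \sum_(j < m) \sum_(i < m) op_mul (T i) (msep m L ((i + m - j) %% m)%N).
  by rewrite exchange_big; apply: eq_bigr => i _; rewrite op_mul_sum_msep_row.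
by rewrite big1.
Qed.
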